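(* Let $x_1\ge x_2\ge\cdots\ge x_n$ be integers and $q\ge1$ an integer, and suppose there is a set $S\subseteq[n]$ of size $2q$ such that all $x_i$ with $i\in S$ are equal. Increase $x_i$ by $1$ for $q$ of the indices $i\in S$ and decrease $x_i$ by $1$ for the other $q$ indices in $S$. Then $\Phi=\sum_{i=1}^n x_i^2$ increases by exactly $2q$, and $\Psi = n\sum_i|x_i| + \sum_{i<j}|x_i-x_j|$ increases by at least $2q^2$. *)

From HB Require Import structures.
From mathcomp Require Import all_boot all_order all_algebra.
Set Implicit Arguments. Unset Strict Implicit. Unset Printing Implicit Defensive.
Import Order.TTheory GRing.Theory Num.Theory.
Local Open Scope ring_scope.

Definition Phi (n : nat) (x : 'I_n -> int) : int := \sum_(i < n) x i ^+ 2.

Definition Psi (n : nat) (x : 'I_n -> int) : int :=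
  n%:R * (\sum_(i < n) `|x i|) + \sum_(i < n) \sum_(j < n | (i < j)%N) `|x i - x j|.

Definition move (n : nat) (S T : {set 'I_n}) (x : 'I_n -> int) : 'I_n -> int :=
  fun i => if i \in T then x i + 1 else if i \in S then x i - 1 else x i.

From HB Require Import structures.
From mathcomp Require Import all_boot all_order all_algebra.
From mathcomp Require Import zify.
Set Implicit Arguments.
Unset Strict Implicit.
Unset Printing Implicit Defensive.
Import Order.TTheory GRing.Theory Num.Theory.
Local Open Scope ring_scope.

(** Write the move as [x + c] with [c i] in {-1, 0, 1}, [\sum_i c i = 0],
    and [x] constant on the support of [c] (call such a [c] balanced for [x]).
    Then every sum [\sum_i c i * f (x i)] vanishes.  For [Phi] this kills the
    cross term, leaving [\sum_i c i ^+ 2 = 2q].  For [Psi] we use the bound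
    [|u + d| >= |u| + sg u * d], whose linear terms cancel in the same way; for
    a pair [i, j] in the support, where [x i = x j], the bound
    [|c i - c j| >= c i^2 c j^2 - c i c j] adds a gain which, summed over all
    ordered pairs, is [(\sum c^2)^2 - (\sum c)^2 = 4q^2]. *)

Lemma sum_mem_card (R : pzSemiRingType) (I : finType) (A : {set I}) :
  \sum_(i : I) ((i \in A)%:R : R) = #|A|%:R.
Proof.
rewrite -sumr_const [RHS]big_mkcond /=.
by apply: eq_bigr => i _; case: (i \in A).
Qed.

Lemma sum_lt_pairs_sym (R : nmodType) (n : nat) (f : 'I_n -> 'I_n -> R) :
  (forall i j, f i j = f j i) -> (forall i, f i i = 0) ->
  (\sum_(i < n) \sum_(j < n | (i < j)%N) f i j) *+ 2
  = \sum_(i < n) \sum_(j < n) f i j.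
Proof.
move=> f_sym f_diag.
have split_row i : \sum_(j < n) f i j
    = \sum_(j < n | (i < j)%N) f i j + \sum_(j < n | (j < i)%N) f i j.
  rewrite (bigID (fun j : 'I_n => (i < j)%N)) /=; congr (_ + _).
  rewrite (bigD1 i) ?ltnn //= f_diag add0r; apply: eq_bigl => j.
  by rewrite -val_eqE /=; lia.
have lower_upper : \sum_(i < n) \sum_(j < n | (j < i)%N) f i j
    = \sum_(i < n) \sum_(j < n | (i < j)%N) f i j.
  under eq_bigr do rewrite big_mkcond.
  rewrite exchange_big /=; apply: eq_bigr => i _; rewrite [RHS]big_mkcond /=.
  by apply: eq_bigr => j _; rewrite f_sym.
by rewrite (eq_bigr _ (fun i _ => split_row i)) big_split /= lower_upper.
Qed.

Lemma sum_mul_const_on_support (R : pzRingType) (I : finType) (c f : I -> R) :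
  (forall i j, c i != 0 -> c j != 0 -> f i = f j) -> \sum_i c i = 0 ->
  \sum_i c i * f i = 0.
Proof.
move=> f_const c_sum0; case: (pickP (fun i => c i != 0)) => [k ck | c0].
  rewrite (eq_bigr (fun i => c i * f k)) => [|i _].
    by rewrite -mulr_suml c_sum0 mul0r.
  by have [->|ci] := eqVneq (c i) 0; rewrite ?mul0r // (f_const i k ci ck).
by apply: big1 => i _; move/negbFE/eqP: (c0 i) ->; rewrite mul0r.
Qed.

Lemma ler_norm_add_sg (R : realDomainType) (u d : R) :
  `|u| + Num.sg u * d <= `|u + d|.
Proof.
rewrite [X in X + _]normrEsg -mulrDr.
apply: le_trans (ler_norm _) _; rewrite normrM normr_sg.
by case: (u != 0); rewrite ?mul1r ?mul0r.
Qed.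

Lemma ler_norm_add_sg_gain (u a b : int) :
  `|a| <= 1 -> `|b| <= 1 -> (a != 0 -> b != 0 -> u = 0) ->
  `|u| + Num.sg u * (a - b) + (a ^+ 2 * b ^+ 2 - a * b) <= `|u + (a - b)|.
Proof.
move=> a_le1 b_le1 u0.
have [/orP ab0 | /norP [a0 b0]] := boolP ((a == 0) || (b == 0)).
  have -> : a ^+ 2 * b ^+ 2 - a * b = 0.
    by case: ab0 => /eqP->; rewrite expr0n /= ?(mul0r, mulr0) subr0.
  by rewrite addr0 ler_norm_add_sg.
rewrite (u0 a0 b0) normr0 sgr0 mul0r !add0r.
have [->|->] : a = 1 \/ a = -1 by lia.
all: by have [->|->] : b = 1 \/ b = -1 by lia.
Qed.

Section Balanced.

Variables (n : nat) (x c : 'I_n -> int).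
Hypothesis c_sum0 : \sum_(i < n) c i = 0.
Hypothesis x_const : forall i j, c i != 0 -> c j != 0 -> x i = x j.

Lemma sum_balanced_mul (f : int -> int) : \sum_(i < n) c i * f (x i) = 0.
Proof.
by apply: sum_mul_const_on_support => // i j ci cj; rewrite (x_const ci cj).
Qed.

Lemma sum_sqr_add_balanced :
  \sum_(i < n) (x i + c i) ^+ 2 = \sum_(i < n) x i ^+ 2 + \sum_(i < n) c i ^+ 2.
Proof.
have cross : \sum_(i < n) x i * c i = 0.
  by rewrite -[RHS](sum_balanced_mul id); apply: eq_bigr => i _; rewrite mulrC.
under eq_bigr do rewrite sqrrD.
by rewrite !big_split /= cross !addr0.
Qed.

Lemma sum_norm_add_balanced : \sum_(i < n) `|x i| <= \sum_(i < n) `|x i + c i|.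
Proof.
rewrite -[leLHS]addr0 -[X in _ + X](sum_balanced_mul Num.sg) -big_split /=.
by apply: ler_sum => i _; rewrite mulrC ler_norm_add_sg.
Qed.

Lemma sum_pair_gain_balanced :
  \sum_(i < n) \sum_(j < n) (Num.sg (x i - x j) * (c i - c j)
                             + (c i ^+ 2 * c j ^+ 2 - c i * c j))
  = (\sum_(i < n) c i ^+ 2) ^+ 2.
Proof.
have sg_left : \sum_(i < n) \sum_(j < n) Num.sg (x i - x j) * c i = 0.
  rewrite -[RHS](sum_balanced_mul (fun t => \sum_(j < n) Num.sg (t - x j))).
  apply: eq_bigr => i _; rewrite mulr_sumr.
  by apply: eq_bigr => j _; rewrite mulrC.
have sg_right : \sum_(i < n) \sum_(j < n) Num.sg (x i - x j) * c j = 0.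
  rewrite exchange_big.
  rewrite -[RHS](sum_balanced_mul (fun t => \sum_(i < n) Num.sg (x i - t))).
  apply: eq_bigr => j _; rewrite mulr_sumr.
  by apply: eq_bigr => i _; rewrite mulrC.
under eq_bigr do under eq_bigr do rewrite mulrBr.
under eq_bigr do rewrite big_split /= !sumrB.
rewrite big_split !sumrB /= sg_left sg_right -!big_distrlr /= c_sum0.
by rewrite subrr mul0r subr0 add0r expr2.
Qed.

Hypothesis c_le1 : forall i, `|c i| <= 1.

Lemma sum_dist_add_balanced :
  (\sum_(i < n) \sum_(j < n | (i < j)%N) `|x i - x j|) *+ 2
    + (\sum_(i < n) c i ^+ 2) ^+ 2
  <= (\sum_(i < n) \sum_(j < n | (i < j)%N) `|(x i + c i) - (x j + c j)|) *+ 2.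
Proof.
have all_pairs (z : 'I_n -> int) :
    (\sum_(i < n) \sum_(j < n | (i < j)%N) `|z i - z j|) *+ 2
    = \sum_(i < n) \sum_(j < n) `|z i - z j|.
  by apply: sum_lt_pairs_sym => [i j|i]; [exact: distrC | rewrite subrr normr0].
rewrite !all_pairs -sum_pair_gain_balanced -big_split /=; apply: ler_sum => i _.
rewrite -big_split /=; apply: ler_sum => j _.
rewrite addrA [in leRHS]opprD [in leRHS]addrACA.
apply: ler_norm_add_sg_gain => // ci cj.
by rewrite (x_const ci cj) subrr.
Qed.

End Balanced.

Lemma eq_Phi n (x y : 'I_n -> int) : x =1 y -> Phi x = Phi y.
Proof. by move=> xy; apply: eq_bigr => i _; rewrite xy. Qed.

Lemma eq_Psi n (x y : 'I_n -> int) : x =1 y -> Psi x = Psi y.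
Proof.
move=> xy; rewrite /Psi; congr (_ * _ + _); apply: eq_bigr => i _.
  by rewrite xy.
by apply: eq_bigr => j _; rewrite !xy.
Qed.

Section MoveShift.

Variables (n : nat) (S T : {set 'I_n}).

Definition shift (i : 'I_n) : int := (i \in T)%:R - (i \in S :\: T)%:R.

Lemma moveE (x : 'I_n -> int) i : move S T x i = x i + shift i.
Proof.
rewrite /move /shift in_setD.
by case: (i \in T); case: (i \in S); rewrite /= ?subr0 ?sub0r ?addr0.
Qed.

Lemma normr_shift_le1 i : `|shift i| <= 1.
Proof. by rewrite /shift in_setD; case: (i \in T); case: (i \in S). Qed.

Hypothesis sub_TS : T \subset S.

Lemma shift_neq0 i : shift i != 0 -> i \in S.
Proof.
rewrite /shift in_setD; case iT: (i \in T); first by rewrite (subsetP sub_TS).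
by case: (i \in S).
Qed.

Lemma sqr_shift i : shift i ^+ 2 = (i \in S)%:R.
Proof.
rewrite /shift in_setD; case iT: (i \in T); first by rewrite (subsetP sub_TS).
by case: (i \in S).
Qed.

Lemma sum_shift_eq0 : #|S| = (2 * #|T|)%N -> \sum_(i < n) shift i = 0.
Proof.
move=> cardS; rewrite sumrB !sum_mem_card cardsD (setIidPr sub_TS) cardS.
by rewrite mul2n -addnn addnK subrr.
Qed.

Lemma sum_sqr_shift : \sum_(i < n) shift i ^+ 2 = #|S|%:R.
Proof. by under eq_bigr do rewrite sqr_shift; rewrite sum_mem_card. Qed.

End MoveShift.

Theorem proposition6p2 (n q : nat) (x : 'I_n -> int) (S T : {set 'I_n})
  (hsort : forall i j : 'I_n, (i <= j)%N -> x j <= x i)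
  (hq : (1 <= q)%N)
  (hS : #|S| = (2 * q)%N)
  (heq : forall i j, i \in S -> j \in S -> x i = x j)
  (hTS : T \subset S)
  (hT : #|T| = q) :
  Phi (move S T x) = Phi x + (2 * q)%:R /\
  Psi x + (2 * q ^ 2)%:R <= Psi (move S T x).
Proof.
have c_sum0 : \sum_(i < n) shift S T i = 0.
  by apply: sum_shift_eq0; rewrite ?hS ?hT.
have c_sqr : \sum_(i < n) shift S T i ^+ 2 = (2 * q)%:R.
  by rewrite sum_sqr_shift ?hS.
have x_const i j : shift S T i != 0 -> shift S T j != 0 -> x i = x j.
  by move=> /(shift_neq0 hTS) iS /(shift_neq0 hTS) jS; apply: heq.
rewrite (eq_Phi (moveE S T x)) (eq_Psi (moveE S T x)).
split; first by rewrite /Phi sum_sqr_add_balanced // c_sqr.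
rewrite /Psi -addrA lerD ?ler_wpM2l ?sum_norm_add_balanced //.
have := sum_dist_add_balanced c_sum0 x_const (normr_shift_le1 S T).
by rewrite c_sqr; lia.
Qed.
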